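(* Let $T=(p,q:F\to E)$ be an LR textile system with $p$ surjective and $F$ source-free, $\Lambda=\Lambda_T$, and let $\{\mathcal G^i_z: z\in E^0, 1\le i\le m(z)\}$ be a 2-graph insplitting partition of $\Lambda$. Define $\mathcal F^i_v=\{\lambda\in F^1: r(\lambda)=v,\ p(\lambda)\in\mathcal G^i_{p(v)}\}$ for $v\in F^0$, $1\le i\le m(p(v))$, and $\mathcal E^i_z=\mathcal G^i_z\cap zE^1$. Then: (1a) if $v,w\in F^0$ and $p(\mathcal F^i_v)\cap p(\mathcal F^j_w)\neq\emptyset$ then $p(\mathcal F^i_v)=p(\mathcal F^j_w)$; (1b) for each $v\in F^0$ there are $w\in F^0$ and $j$ with $q(vF^1)\subseteq p(\mathcal F^j_w)$; (2) $\mathcal E^i_z=p(\mathcal F^i_v)$ for every $v\in F^0$ with $p(v)=z$; (3) $\mathcal G^i_z=\mathcal E^i_z\sqcup r_F(q^{-1}(\mathcal E^i_z))$ for all $z\in E^0$ and $1\le i\le m(z)$.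
   Context: Directed graph $E=(E^0,E^1,r,s)$, $zE^1=r^{-1}(z)$; $F$ source-free: $r$ onto $F^0$. Textile system $T=(p,q:F\to E)$: graph homomorphisms (commuting with $r,s$) with $f\mapsto(r(f),p(f),s(f),q(f))$ injective. LR: $p$ has unique $r$-path lifting (for $v\in F^0,e\in E^1$ with $p(v)=r(e)$, exactly one $f\in F^1$ with $r(f)=v,p(f)=e$), $q$ has unique $s$-path lifting (same with $s$). $\Lambda_T$ is the 2-graph with vertices $E^0$, color-1 edges $E^1$ (range/source from $E$), color-2 edges $F^0$ with $r(w)=q(w)$, $s(w)=p(w)$, and commuting squares $ve\sim e'w$ iff some $f\in F^1$ has $r(f)=v,s(f)=w,p(f)=e,q(f)=e'$; $\Lambda^1=E^1\sqcup F^0$. A 2-graph insplitting partition: for each $z\in E^0$, a partition of the edges of $\Lambda^1$ with range $z$ into nonempty sets $\mathcal G^1_z,\dots,\mathcal G^{m(z)}_z$ with the pairing condition: for each $f\in F^1$ (a commuting square $r(f)p(f)\sim q(f)s(f)$), the edges $r(f)$ and $q(f)$ lie in the same set $\mathcal G^j_{q(r(f))}$. *)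

Record graph := Graph {
  V : Type;
  Ed : Type;
  rg : Ed -> V;
  sc : Ed -> V
}.

Record ghom (F E : graph) := GHom {
  hV : V F -> V E;
  hE : Ed F -> Ed E
}.
Arguments hV {F E}.
Arguments hE {F E}.

Definition is_ghom {F E : graph} (h : ghom F E) : Prop :=
  (forall f, rg E (hE h f) = hV h (rg F f)) /\
  (forall f, sc E (hE h f) = hV h (sc F f)).

Definition source_free (F : graph) : Prop :=
  forall v : V F, exists f : Ed F, rg F f = v.

Definition ghom_surjective {F E : graph} (h : ghom F E) : Prop :=
  (forall z : V E, exists v, hV h v = z) /\ (forall e : Ed E, exists f, hE h f = e).

Definition textile_system {F E : graph} (p q : ghom F E) : Prop :=
  is_ghom p /\ is_ghom q /\
  (forall f g : Ed F,
      rg F f = rg F g -> hE p f = hE p g -> sc F f = sc F g -> hE q f = hE q g ->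
      f = g).

(* LR: p has unique r-path lifting, q has unique s-path lifting. *)
Definition LR {F E : graph} (p q : ghom F E) : Prop :=
  (forall (v : V F) (e : Ed E), hV p v = rg E e ->
      exists! f : Ed F, rg F f = v /\ hE p f = e) /\
  (forall (v : V F) (e : Ed E), hV q v = sc E e ->
      exists! f : Ed F, sc F f = v /\ hE q f = e).

(* The edges Lambda^1 = E^1 ⊔ F^0 of the 2-graph Lambda_T:
   inl e (color 1, e ∈ E^1) and inr w (color 2, w ∈ F^0). *)
Definition Lam1 (F E : graph) : Type := (Ed E + V F)%type.

Definition lam_rg {F E : graph} (q : ghom F E) (x : Lam1 F E) : V E :=
  match x with
  | inl e => rg E e
  | inr w => hV q w
  end.

(* A 2-graph insplitting partition of Lambda_T: for each z ∈ E^0, sets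
   G z 0, ..., G z (m z - 1) (0-based indexing of G^1_z, ..., G^{m(z)}_z)
   partitioning the edges of Lambda^1 with range z into nonempty sets,
   with the pairing condition. *)
Definition insplitting_partition {F E : graph} (q : ghom F E)
    (m : V E -> nat) (G : V E -> nat -> Lam1 F E -> Prop) : Prop :=
  (forall z i x, i < m z -> G z i x -> lam_rg q x = z) /\
  (forall z i, i < m z -> exists x, G z i x) /\
  (forall z x, lam_rg q x = z -> exists! i, i < m z /\ G z i x) /\
  (* pairing condition: for every square f, r(f) and q(f) lie in the same block *)
  (forall f : Ed F, exists j, j < m (hV q (rg F f)) /\
      G (hV q (rg F f)) j (inr (rg F f)) /\
      G (hV q (rg F f)) j (inl (hE q f))).

Definition Fset {F E : graph} (p : ghom F E) (G : V E -> nat -> Lam1 F E -> Prop)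
    (v : V F) (i : nat) : Ed F -> Prop :=
  fun l => rg F l = v /\ G (hV p v) i (inl (hE p l)).

Definition Eset {F E : graph} (G : V E -> nat -> Lam1 F E -> Prop)
    (z : V E) (i : nat) : Ed E -> Prop :=
  fun e => rg E e = z /\ G z i (inl e).

Definition pimg {F E : graph} (p : ghom F E) (S : Ed F -> Prop) : Ed E -> Prop :=
  fun e => exists f, S f /\ hE p f = e.

From Stdlib Require Import Setoid.

(* The partition blocks are disjoint, and the pairing condition forces a vertex
   w = r(f) of F (a color-2 edge of Lambda) into the block of the color-1 edge
   q(f); since F is source-free this determines the color-2 part of every block
   from its color-1 part.  For the color-1 part, unique r-path lifting for p
   identifies z E^1 with p(v F^1) whenever p(v) = z, so p(F^i_v) is just
   E^i_{p(v)}; parts (1a), (1b) and (2) are reformulations of this identity. *)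

Section InsplittingPartition.

Variables (F E : graph) (p q : ghom F E).
Variables (m : V E -> nat) (G : V E -> nat -> Lam1 F E -> Prop).

Hypothesis HG : insplitting_partition q m G.
Hypothesis q_rg : forall f, rg E (hE q f) = hV q (rg F f).
Hypothesis p_rg : forall f, rg E (hE p f) = hV p (rg F f).
Hypothesis p_lift : forall (v : V F) (e : Ed E), hV p v = rg E e ->
  exists! f : Ed F, rg F f = v /\ hE p f = e.

Lemma block_rg z i x : i < m z -> G z i x -> lam_rg q x = z.
Proof. destruct HG as [H _]; apply H. Qed.

Lemma block_unique z i j x :
  i < m z -> j < m z -> G z i x -> G z j x -> i = j.
Proof.
  intros Hi Hj Gi Gj.
  destruct HG as [_ [_ [Hex _]]].
  destruct (Hex z x (block_rg z i x Hi Gi)) as [k [_ Hk]].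
  rewrite <- (Hk i (conj Hi Gi)); apply Hk; auto.
Qed.

Lemma block_inr_rg_iff_inl_q z i f :
  i < m z -> G z i (inr (rg F f)) <-> G z i (inl (hE q f)).
Proof.
  intros Hi.
  destruct HG as [_ [_ [_ Hpair]]].
  destruct (Hpair f) as [j [Hj [Gr Gq]]].
  split; intros Gx.
  - pose proof (block_rg _ _ _ Hi Gx) as Hz; simpl in Hz; subst z.
    now rewrite (block_unique _ _ _ _ Hi Hj Gx Gr).
  - pose proof (block_rg _ _ _ Hi Gx) as Hz; simpl in Hz.
    rewrite q_rg in Hz; subst z.
    now rewrite (block_unique _ _ _ _ Hi Hj Gx Gq).
Qed.

Lemma Eset_iff_pimg_Fset v i e :
  Eset G (hV p v) i e <-> pimg p (Fset p G v i) e.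
Proof.
  split.
  - intros [He Ge].
    destruct (p_lift v e (eq_sym He)) as [f [[Hf He'] _]].
    exists f; subst e; repeat split; auto.
  - intros [f [[Hf Gf] <-]].
    split; auto.
    now rewrite p_rg, Hf.
Qed.

Lemma pimg_Fset_eq_of_meet v w i j :
  i < m (hV p v) -> j < m (hV p w) ->
  (exists e, pimg p (Fset p G v i) e /\ pimg p (Fset p G w j) e) ->
  forall e, pimg p (Fset p G v i) e <-> pimg p (Fset p G w j) e.
Proof.
  intros Hi Hj [e [Ev Ew]] e'.
  apply Eset_iff_pimg_Fset in Ev as [Ev Gv].
  apply Eset_iff_pimg_Fset in Ew as [Ew Gw].
  assert (Hvw : hV p v = hV p w) by congruence.
  rewrite <- Hvw in Hj, Gw.
  pose proof (block_unique _ _ _ _ Hi Hj Gv Gw); subst j.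
  rewrite <- !Eset_iff_pimg_Fset, Hvw.
  reflexivity.
Qed.

Lemma q_out_edges_in_pimg_Fset v :
  (forall z : V E, exists w, hV p w = z) ->
  exists (w : V F) (j : nat), j < m (hV p w) /\
    forall f : Ed F, rg F f = v -> pimg p (Fset p G w j) (hE q f).
Proof.
  intros p_surjV.
  destruct (p_surjV (hV q v)) as [w Hw].
  destruct HG as [_ [_ [Hex _]]].
  destruct (Hex (hV q v) (inr v) eq_refl) as [j [[Hj Gj] _]].
  exists w, j; rewrite Hw; split; auto.
  intros f <-.
  apply Eset_iff_pimg_Fset; rewrite Hw.
  split; [apply q_rg |].
  now apply block_inr_rg_iff_inl_q.
Qed.

Lemma block_decomposition z i :
  source_free F -> i < m z ->
  forall x : Lam1 F E,
    G z i x <->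
    ((exists e, x = inl e /\ Eset G z i e) \/
     (exists w, x = inr w /\ exists f, rg F f = w /\ Eset G z i (hE q f))).
Proof.
  intros sf Hi x; split.
  - intros Gx; pose proof (block_rg _ _ _ Hi Gx) as Hz.
    destruct x as [e | w].
    + left; exists e; repeat split; auto.
    + right; exists w; split; auto.
      destruct (sf w) as [f <-]; exists f; split; auto.
      split.
      * now rewrite q_rg.
      * now apply block_inr_rg_iff_inl_q.
  - intros [[e [-> [_ Ge]]] | [w [-> [f [<- [_ Gq]]]]]]; auto.
    now apply block_inr_rg_iff_inl_q.
Qed.

End InsplittingPartition.

Theorem theorem7p13 (F E : graph) (p q : ghom F E)
  (m : V E -> nat) (G : V E -> nat -> Lam1 F E -> Prop) :
  textile_system p q -> LR p q -> ghom_surjective p -> source_free F ->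
  insplitting_partition q m G ->
  (* (1a) *)
  (forall (v w : V F) (i j : nat), i < m (hV p v) -> j < m (hV p w) ->
     (exists e, pimg p (Fset p G v i) e /\ pimg p (Fset p G w j) e) ->
     forall e, pimg p (Fset p G v i) e <-> pimg p (Fset p G w j) e) /\
  (* (1b) *)
  (forall v : V F, exists (w : V F) (j : nat), j < m (hV p w) /\
     forall f : Ed F, rg F f = v -> pimg p (Fset p G w j) (hE q f)) /\
  (* (2) *)
  (forall (z : V E) (i : nat) (v : V F), i < m z -> hV p v = z ->
     forall e, Eset G z i e <-> pimg p (Fset p G v i) e) /\
  (* (3) *)
  (forall (z : V E) (i : nat), i < m z ->
     forall x : Lam1 F E,
       G z i x <->
       ((exists e, x = inl e /\ Eset G z i e) \/
        (exists w, x = inr w /\ exists f, rg F f = w /\ Eset G z i (hE q f)))).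
Proof.
  intros [[p_rg _] [[q_rg _] _]] [p_lift _] [p_surjV _] sf HG.
  split; [| split; [| split]].
  - eapply pimg_Fset_eq_of_meet; eassumption.
  - intros v; eapply q_out_edges_in_pimg_Fset; eassumption.
  - intros z i v _ <-; eapply Eset_iff_pimg_Fset; eassumption.
  - intros z i; eapply block_decomposition; eassumption.
Qed.
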